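(* Let $l\ge1$ and fixed states $\sigma_1,\dots,\sigma_l\in D_k$ be given (independent of $n$). For each $n$, let $(M_i^{(n)})_{i=1}^l$ be a POVM on $\mathbb C^{N}$ ($N=N(n)$; $M_i^{(n)}\ge0$, $\sum_iM_i^{(n)}=I_N$) with $\|M_i^{(n)}\|=1$ for all $i$, and let $\Phi_n(\rho)=\sum_{i=1}^l\mathrm{Tr}[M_i^{(n)}\rho]\sigma_i$. Then the sequence of projections $P_n=V_nV_n^*$ associated to $\Phi_n$ (via Stinespring isometries $V_n$ with $\Phi_n(X)=(\mathrm{id}\otimes\mathrm{Tr})(V_nXV_n^* )$) satisfies condition $\mathcal C_m$, where $$m=\liminf_{n\to\infty}\min_{1\le i\le l}\dim_1M_i^{(n)}\ \ge 1.$$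
   Context: $\dim_1X$ denotes the dimension of the eigenspace of $X$ for the eigenvalue $1$. Condition $\mathcal C_m$: for every $A\in D_k$, the $m$ largest eigenvalues of $P_n(A\otimes I)P_n$ converge as $n\to\infty$ to a common limit $f(A)$. $D_k$ is the set of $k\times k$ density matrices. *)

From HB Require Import structures.
From mathcomp Require Import all_boot all_order all_algebra.
From mathcomp Require Import complex mxtens.
From mathcomp Require Import all_classical all_reals all_analysis.

Set Implicit Arguments.
Unset Strict Implicit.
Unset Printing Implicit Defensive.

Import Order.TTheory GRing.Theory Num.Theory numFieldNormedType.Exports.
Local Open Scope classical_set_scope.
Local Open Scope ring_scope.

Section QDefs.
Variable R : realType.
Local Notation C := R[i].

Definition adjmx m n (A : 'M[C]_(m, n)) : 'M[C]_(n, m) :=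
  (map_mx (@conjc R) A)^T.

Definition vnorm n (v : 'cV[C]_n) : R :=
  Num.sqrt (\sum_i (Normc.normc (v i 0)) ^+ 2).

Definition opnorm m n (A : 'M[C]_(m, n)) : R :=
  sup [set vnorm (A *m v) | v in [set v : 'cV[C]_n | vnorm v = 1]].

Definition psdmx n (A : 'M[C]_n) : Prop :=
  forall v : 'cV[C]_n, 0 <= (adjmx v *m A *m v) 0 0.

Definition density k (A : 'M[C]_k) : Prop := psdmx A /\ \tr A = 1.

Definition povm l N (M : 'I_l -> 'M[C]_N) : Prop :=
  (forall i, psdmx (M i)) /\ \sum_(i < l) M i = 1%:M.

Definition dim1 n (X : 'M[C]_n) : nat := \rank (eigenspace X 1).

Definition mpchannel l N k (M : 'I_l -> 'M[C]_N) (sigma : 'I_l -> 'M[C]_k)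
  (rho : 'M[C]_N) : 'M[C]_k :=
  \sum_(i < l) \tr (M i *m rho) *: sigma i.

(* partial trace over the second factor of C^k (x) C^d
   (index convention of mxtens: (i, j) |-> i * d + j, as for A *t B) *)
Definition ptrace2 k d (Y : 'M[C]_(k * d)) : 'M[C]_k :=
  \matrix_(i, i') \sum_(j < d) Y (mxtens_index (i, j)) (mxtens_index (i', j)).

Definition stinespring N k d (Phi : 'M[C]_N -> 'M[C]_k)
  (V : 'M[C]_(k * d, N)) : Prop :=
  adjmx V *m V = 1%:M /\
  forall X : 'M[C]_N, Phi X = ptrace2 (V *m X *m adjmx V).

Definition eigvals_desc n (A : 'M[C]_n) (s : seq R) : Prop :=
  sorted (fun x y : R => y <= x) s /\
  char_poly A = \prod_(x <- s) ('X - ((x%:C)%C)%:P).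

(* Condition C_m for a sequence of projections P_n on C^k (x) C^{d n}:
   for every A in D_k, the m largest eigenvalues of P_n (A (x) I) P_n
   converge, as n -> oo, to a common limit f(A). *)
Definition condC (k m : nat) (d : nat -> nat)
  (P : forall n, 'M[C]_(k * d n)) : Prop :=
  forall A : 'M[C]_k, density A ->
  exists fA : R,
    forall s : nat -> seq R,
      (forall n, eigvals_desc (P n *m (A *t (1%:M : 'M[C]_(d n))) *m P n) (s n)) ->
      forall j, (j < m)%N -> (fun n => nth 0 (s n) j) @ \oo --> fA.

Definition liminf_nat_eq (u : nat -> nat) (m : nat) : Prop :=
  (exists n0, forall n, (n0 <= n)%N -> (m <= u n)%N) /\
  (forall n0, exists n, (n0 <= n)%N /\ (u n <= m)%N).

End QDefs.

From HB Require Import structures.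
From mathcomp Require Import all_boot all_order all_algebra.
From mathcomp Require Import complex mxtens.
From mathcomp Require Import all_classical all_reals all_analysis.
From mathcomp Require Import ring.
Import Order.TTheory GRing.Theory Num.Theory.
Local Open Scope ring_scope.

Set Implicit Arguments.
Unset Strict Implicit.
Unset Printing Implicit Defensive.

(* Pulling [A (x) I] back through the Stinespring isometry gives
   [V^* (A (x) I) V = sum_i Tr(A sigma_i) M_i], so [P (A (x) I) P] is bounded
   above by [a = max_i Tr(A sigma_i)].  A POVM effect of norm one has the
   eigenvalue 1, and the other effects vanish on its eigenvalue-1 eigenspace;
   for the index [i] attaining [a], [V] maps that eigenspace isometrically into
   the [a]-eigenspace of [P (A (x) I) P].  Hence, once [dim_1 M_i >= m], the
   [m] largest eigenvalues are all equal to [a], which does not depend on [n]. *)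

Lemma nth_sorted_ge_max disp (T : orderType disp) (x0 a : T) (s : seq T) r :
  sorted >=%O s -> (forall x, x \in s -> (x <= a)%O) ->
  (r <= count_mem a s)%N -> forall j, (j < r)%N -> nth x0 s j = a.
Proof.
elim: s r => [|x s IHs] r /=; first by rewrite leqn0 => _ _ /eqP ->.
move=> sorted_xs le_a; have sorted_s := path_sorted sorted_xs.
have le_a_s y : y \in s -> (y <= a)%O by move=> ys; rewrite le_a ?inE ?ys ?orbT.
have [xa|xa] := eqVneq x a.
  rewrite add1n => r_le [|j] j_lt /=; first exact: xa.
  by apply: (IHs r.-1) => //; rewrite -ltnS (ltn_predK j_lt).
have x_lt : (x < a)%O by rewrite lt_neqAle xa le_a ?mem_head.
have -> : count_mem a s = 0%N.
  apply/eqP; rewrite -leqn0 leqNgt -has_count; apply/hasP=> -[y ys /eqP ya].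
  have /allP /(_ _ ys) := order_path_min ge_trans sorted_xs.
  by rewrite /= ya leNgt x_lt.
by rewrite leqn0 => /eqP ->.
Qed.

Lemma mxrank_sum_le (F : fieldType) m n I (r : seq I) (P : pred I)
  (G : I -> 'M[F]_(m, n)) :
  (\rank (\sum_(i <- r | P i) G i)%R <= \sum_(i <- r | P i) \rank (G i))%N.
Proof.
elim/big_ind2: _ => [|A a B b leA leB|i _]; [by rewrite mxrank0 | | by []].
apply: leq_trans (mxrankS (addmx_sub_adds (submx_refl A) (submx_refl B))) _.
exact: leq_trans (mxrank_adds_leqif A B).1 (leq_add leA leB).
Qed.

Lemma mxrank_diag_le (F : fieldType) n (v : 'rV[F]_n) :
  (\rank (diag_mx v) <= \sum_i (v 0%R i != 0%R))%N.
Proof.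
rewrite diag_mx_sum_delta; apply: leq_trans (mxrank_sum_le _ _ _) _.
apply: leq_sum=> i _; case: eqP=> [->|_]; first by rewrite scale0r mxrank0.
by apply: leq_trans (mxrank_scale _ _) _; rewrite mxrank_delta.
Qed.

Section Adjoint.
Variable R : realType.
Local Notation C := R[i].

Lemma adjmxE m n (A : 'M[C]_(m, n)) i j : adjmx A i j = (A j i)^*.
Proof. by rewrite !mxE. Qed.

Lemma adjmxK m n (A : 'M[C]_(m, n)) : adjmx (adjmx A) = A.
Proof. by apply/matrixP=> i j; rewrite !adjmxE conjCK. Qed.

Lemma adjmxM m n p (A : 'M[C]_(m, n)) (B : 'M[C]_(n, p)) :
  adjmx (A *m B) = adjmx B *m adjmx A.
Proof.
apply/matrixP=> i j; rewrite adjmxE !mxE rmorph_sum.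
by apply: eq_bigr=> t _; rewrite !adjmxE rmorphM mulrC.
Qed.

Lemma adjmxD m n (A B : 'M[C]_(m, n)) : adjmx (A + B) = adjmx A + adjmx B.
Proof. by apply/matrixP=> i j; rewrite !mxE rmorphD. Qed.

Lemma adjmxZ m n (c : C) (A : 'M[C]_(m, n)) : adjmx (c *: A) = c^* *: adjmx A.
Proof. by apply/matrixP=> i j; rewrite !mxE rmorphM. Qed.

Lemma adjmxN m n (A : 'M[C]_(m, n)) : adjmx (- A) = - adjmx A.
Proof. by rewrite -scaleN1r adjmxZ rmorphN1 scaleN1r. Qed.

Lemma adjmx0 m n : adjmx (0 : 'M[C]_(m, n)) = 0.
Proof. by apply/matrixP=> i j; rewrite !mxE rmorph0. Qed.

Lemma adjmx1 n : adjmx (1%:M : 'M[C]_n) = 1%:M.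
Proof. by apply/matrixP=> i j; rewrite !mxE rmorph_nat eq_sym. Qed.

Lemma adjmx_eq0 m n (A : 'M[C]_(m, n)) : (adjmx A == 0) = (A == 0).
Proof. by apply/eqP/eqP=> [A0|->]; [rewrite -[A]adjmxK A0|]; rewrite adjmx0. Qed.

Lemma adjmx_delta n (i : 'I_n) : adjmx (delta_mx i 0 : 'cV[C]_n) = delta_mx 0 i.
Proof. by apply/matrixP=> a b; rewrite !mxE rmorph_nat andbC. Qed.

End Adjoint.

Section Forms.
Variable R : realType.
Local Notation C := R[i].

Definition sform n (X : 'M[C]_n) (u w : 'cV[C]_n) : C := (adjmx u *m X *m w) 0 0.
Definition qform n (X : 'M[C]_n) (v : 'cV[C]_n) : C := sform X v v.
Definition dotv n (u w : 'cV[C]_n) : C := (adjmx u *m w) 0 0.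

Lemma dotvE n (u w : 'cV[C]_n) : dotv u w = \sum_i (u i 0)^* * w i 0.
Proof. by rewrite /dotv mxE; apply: eq_bigr=> i _; rewrite adjmxE. Qed.

Lemma dotvZr n (u w : 'cV[C]_n) c : dotv u (c *: w) = c * dotv u w.
Proof. by rewrite /dotv -scalemxAr mxE. Qed.

Lemma dotv_ge0 n (v : 'cV[C]_n) : 0 <= dotv v v.
Proof. by rewrite dotvE; apply: sumr_ge0=> i _; rewrite mulrC mul_conjC_ge0. Qed.

Lemma dotv_eq0 n (v : 'cV[C]_n) : (dotv v v == 0) = (v == 0).
Proof.
apply/idP/eqP=> [|->]; last by rewrite /dotv mulmx0 mxE.
rewrite dotvE psumr_eq0 => [/allP v0|i _]; last by rewrite mulrC mul_conjC_ge0.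
apply/matrixP=> i j; rewrite ord1 mxE.
by have := v0 i (mem_index_enum _); rewrite /= mulrC mul_conjC_eq0 => /eqP.
Qed.

Lemma vnorm_ge0 n (x : 'cV[C]_n) : 0 <= vnorm x.
Proof. exact: sqrtr_ge0. Qed.

Lemma vnorm_sqr n (x : 'cV[C]_n) : ((vnorm x) ^+ 2)%:C%C = dotv x x.
Proof.
rewrite /vnorm sqr_sqrtr; last by apply: sumr_ge0 => i _; rewrite sqr_ge0.
rewrite dotvE rmorph_sum; apply: eq_bigr => i _; rewrite rmorphXn /=.
have -> : (Normc.normc (x i 0))%:C%C = `|x i 0|.
  by case: (x i 0) => a b; rewrite normc_def.
by rewrite normCK mulrC.
Qed.

Lemma qformE n (X : 'M[C]_n) v : qform X v = dotv v (X *m v).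
Proof. by rewrite /qform /sform /dotv mulmxA. Qed.

Lemma qform1 n (v : 'cV[C]_n) : qform 1%:M v = dotv v v.
Proof. by rewrite qformE mul1mx. Qed.

Lemma qform_conj n p (X : 'M[C]_n) (B : 'M[C]_(n, p)) v :
  qform (adjmx B *m X *m B) v = qform X (B *m v).
Proof. by rewrite /qform /sform adjmxM !mulmxA. Qed.

Lemma dotv_mulmx n p (B : 'M[C]_(n, p)) v :
  dotv (B *m v) (B *m v) = qform (adjmx B *m B) v.
Proof. by rewrite -qform1 -qform_conj mulmx1. Qed.

Lemma qformD n (X Y : 'M[C]_n) v : qform (X + Y) v = qform X v + qform Y v.
Proof. by rewrite /qform /sform mulmxDr mulmxDl mxE. Qed.

Lemma qformZ n (c : C) (X : 'M[C]_n) v : qform (c *: X) v = c * qform X v.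
Proof. by rewrite /qform /sform -scalemxAr -scalemxAl mxE. Qed.

Lemma qformB n (X Y : 'M[C]_n) v : qform (X - Y) v = qform X v - qform Y v.
Proof. by rewrite -scaleN1r qformD qformZ mulN1r. Qed.

Lemma qform_sum n I (r : seq I) (P : pred I) (F : I -> 'M[C]_n) v :
  qform (\sum_(i <- r | P i) F i) v = \sum_(i <- r | P i) qform (F i) v.
Proof.
have qform0 : qform 0 v = 0 by rewrite /qform /sform mulmx0 mul0mx mxE.
exact: (big_morph (fun X => qform X v) (fun X Y => qformD X Y v) qform0).
Qed.

Lemma qform_entries n (X : 'M[C]_n) v :
  qform X v = \sum_a \sum_b (v a 0)^* * X a b * v b 0.
Proof.
rewrite /qform /sform mxE exchange_big; apply: eq_bigr => b _.
by rewrite mxE mulr_suml; apply: eq_bigr => a _; rewrite adjmxE.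
Qed.

Lemma sformDl n (X : 'M[C]_n) u1 u2 w :
  sform X (u1 + u2) w = sform X u1 w + sform X u2 w.
Proof. by rewrite /sform adjmxD !mulmxDl mxE. Qed.

Lemma sformDr n (X : 'M[C]_n) u w1 w2 :
  sform X u (w1 + w2) = sform X u w1 + sform X u w2.
Proof. by rewrite /sform !mulmxDr mxE. Qed.

Lemma sformZl n (X : 'M[C]_n) c u w : sform X (c *: u) w = c^* * sform X u w.
Proof. by rewrite /sform adjmxZ -!scalemxAl mxE. Qed.

Lemma sformZr n (X : 'M[C]_n) c u w : sform X u (c *: w) = c * sform X u w.
Proof. by rewrite /sform -!scalemxAr mxE. Qed.

Lemma sform_delta n (X : 'M[C]_n) i j :
  sform X (delta_mx i 0) (delta_mx j 0) = X i j.
Proof. by rewrite /sform adjmx_delta -rowE -colE !mxE. Qed.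

Lemma psd_sum n I (r : seq I) (P : pred I) (F : I -> 'M[C]_n) :
  (forall i, P i -> psdmx (F i)) -> psdmx (\sum_(i <- r | P i) F i).
Proof.
move=> psdF v; rewrite -[leRHS]/(qform _ v) qform_sum.
by apply: sumr_ge0 => i Pi; apply: psdF.
Qed.

Lemma psd_adjmxMmx n p (B : 'M[C]_(n, p)) : psdmx (adjmx B *m B).
Proof. by move=> v; rewrite -[leRHS]/(qform _ v) -dotv_mulmx dotv_ge0. Qed.

(* Polarization: [sform X u w] and [sform X w u] are read off the real
   numbers [qform X (u + w)] and [qform X (u + 'i w)]. *)
Lemma psd_sformC n (X : 'M[C]_n) u w : psdmx X -> sform X u w = (sform X w u)^*.
Proof.
move=> psdX; have qreal v : (sform X v v)^* = sform X v v.
  exact/conj_Creal/ger0_real/psdX.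
have := qreal (u + w); have := qreal (u + 'i *: w).
rewrite !(sformDl, sformDr, sformZl, sformZr) !(rmorphD, rmorphM) /= !qreal.
rewrite !conjCK conjCi.
set a := sform X u u; set b := sform X w w.
set p := sform X u w; set q := sform X w u.
move=> h2 h1; have ii : 'i * 'i = -1 :> C := mulCii _.
have : 2%:R * (p^* - q) = ((a + p^* + (q^* + b)) - (a + p + (q + b))) +
   'i * ((a + - 'i * p^* + ('i * q^* + 'i * (- 'i * b))) -
         (a + 'i * p + (- 'i * q + - 'i * ('i * b))))
   - ('i * 'i + 1) * (- p^* + q^* - p + q) by ring.
rewrite h1 h2 ii !subrr mulr0 addr0 addNr mul0r subr0 => /eqP.
by rewrite mulf_eq0 pnatr_eq0 subr_eq0 => /eqP <-; rewrite conjCK.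
Qed.

Lemma psd_herm n (X : 'M[C]_n) : psdmx X -> adjmx X = X.
Proof.
move=> psdX; apply/matrixP=> i j.
by rewrite adjmxE -!sform_delta [in RHS](psd_sformC _ _ psdX).
Qed.

Lemma dotv_adj_isometry_le m n (V : 'M[C]_(m, n)) w : adjmx V *m V = 1%:M ->
  dotv (adjmx V *m w) (adjmx V *m w) <= dotv w w.
Proof.
move=> VV; rewrite dotv_mulmx adjmxK -subr_ge0 -qform1 -qformB.
have -> : 1%:M - V *m adjmx V =
          adjmx (1%:M - V *m adjmx V) *m (1%:M - V *m adjmx V).
  rewrite adjmxD adjmxN adjmx1 adjmxM adjmxK mulmxBl mul1mx mulmxBr mulmx1.
  by rewrite mulmxA -(mulmxA V) VV mulmx1 subrr subr0.
exact: psd_adjmxMmx.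
Qed.

End Forms.

Section Spectral.
Variable R : realType.
Local Notation C := R[i].

Definition realdiag n (d : 'I_n -> R) : 'M[C]_n := diag_mx (\row_j (d j)%:C%C).

Lemma realdiag_adj n (d : 'I_n -> R) : adjmx (realdiag d) = realdiag d.
Proof.
apply/matrixP=> i j; rewrite !mxE eq_sym.
by case: eqP=> [->|]; rewrite ?mulr1n ?mulr0n ?conjc_real ?rmorph0.
Qed.

Lemma realdiagM n (d d' : 'I_n -> R) :
  realdiag d *m realdiag d' = realdiag (fun j => d j * d' j).
Proof.
apply/matrixP=> i j; rewrite mul_diag_mx !mxE.
by case: eqP=> [->|]; rewrite ?mulr1n ?mulr0n ?mulr0 // rmorphM.
Qed.

Lemma hermitian_spectral n (H : 'M[C]_n) : adjmx H = H ->
  exists Q : 'M[C]_n, exists d : 'I_n -> R,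
    adjmx Q *m Q = 1%:M /\ H = adjmx Q *m realdiag d *m Q.
Proof.
move=> Hherm; have adjE m p (A : 'M[C]_(m, p)) : adjmx A = map_mx Num.conj A^T.
  exact: map_trmx.
have Hsym : H \is hermsymmx.
  by apply/is_hermitianmxP; rewrite expr0 scale1r -adjE Hherm.
have /orthomx_spectralP HQ := hermitian_normalmx Hsym.
have /mxOverP Dreal := hermitian_spectral_diag_real Hsym.
have iQ : invmx (spectralmx H) = adjmx (spectralmx H).
  by rewrite adjE invmx_unitary ?spectral_unitarymx.
exists (spectralmx H), (fun j => complex.Re (spectral_diag H 0 j)).
split; first by rewrite -iQ mulVmx ?spectral_unit.
rewrite [LHS]HQ iQ; congr (_ *m diag_mx _ *m _); apply/rowP=> j; rewrite mxE.
by have /complex_realP [x ->] := Dreal 0 j.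
Qed.

Section UnitaryConjugate.
Variables (n : nat) (Q : 'M[C]_n).
Hypothesis QQ : adjmx Q *m Q = 1%:M.
Let QQ' : Q *m adjmx Q = 1%:M := mulmx1C QQ.

Lemma realdiag_conj_eigvec (d : 'I_n -> R) j :
  adjmx Q *m realdiag d *m Q *m (adjmx Q *m (delta_mx j 0 : 'cV_n)) =
  (d j)%:C%C *: (adjmx Q *m delta_mx j 0).
Proof.
rewrite -!mulmxA (mulmxA Q) QQ' mul1mx mul_diag_mx scalemxAr.
congr (_ *m _); apply/matrixP=> a b; rewrite !mxE.
by case: eqP=> [->|]; rewrite ?mulr1 ?mulr0.
Qed.

Lemma dotv_unitary_delta j :
  dotv (adjmx Q *m (delta_mx j 0 : 'cV_n)) (adjmx Q *m delta_mx j 0) = 1.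
Proof.
by rewrite dotv_mulmx adjmxK QQ' qform1 /dotv adjmx_delta -rowE !mxE !eqxx.
Qed.

Lemma qform_realdiag_conj (d : 'I_n -> R) v :
  qform (adjmx Q *m realdiag d *m Q) v =
  \sum_j (d j)%:C%C * `|(Q *m v) j 0| ^+ 2.
Proof.
rewrite qform_conj qformE dotvE; apply: eq_bigr=> j _.
by rewrite mul_diag_mx !mxE normCK; ring.
Qed.

Lemma psd_realdiag_conj_ge0 (d : 'I_n -> R) j :
  psdmx (adjmx Q *m realdiag d *m Q) -> 0 <= d j.
Proof.
move=> /(_ (adjmx Q *m delta_mx j 0)); rewrite -[leRHS]/(qform _ _) qformE.
by rewrite realdiag_conj_eigvec dotvZr dotv_unitary_delta mulr1 ler0c.
Qed.

Lemma vnorm_realdiag_conj_le (d : 'I_n -> R) (mu : R) v :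
  0 <= mu -> (forall j, 0 <= d j <= mu) ->
  vnorm (adjmx Q *m realdiag d *m Q *m v) <= mu * vnorm v.
Proof.
move=> mu0 dmu; set D := adjmx Q *m realdiag d *m Q.
have DD : adjmx D *m D = adjmx Q *m realdiag (fun j => d j * d j) *m Q.
  rewrite !adjmxM adjmxK realdiag_adj /D !mulmxA -(mulmxA _ Q) QQ' mulmx1.
  by rewrite -(mulmxA (adjmx Q)) realdiagM.
have Qv : dotv v v = dotv (Q *m v) (Q *m v) by rewrite dotv_mulmx QQ qform1.
have : ((vnorm (D *m v)) ^+ 2)%:C%C <= ((mu * vnorm v) ^+ 2)%:C%C.
  rewrite vnorm_sqr dotv_mulmx DD qform_realdiag_conj exprMn rmorphM /=.
  rewrite vnorm_sqr Qv dotvE mulr_sumr; apply: ler_sum=> j _.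
  rewrite [_^* * _]mulrC -normCK; apply: ler_wpM2r=> //.
  by have /andP [d0 dle] := dmu j; rewrite lecR expr2 ler_pM.
by rewrite lecR ler_pXn2r // nnegrE ?mulr_ge0 // vnorm_ge0.
Qed.

Lemma eigvals_perm_realdiag (d : 'I_n -> R) (s : seq R) :
  char_poly (adjmx Q *m realdiag d *m Q) = \prod_(x <- s) ('X - (x%:C%C)%:P) ->
  perm_eq s [seq d j | j <- index_enum 'I_n].
Proof.
have [_ Qunit] := mulmx1_unit QQ.
have -> : adjmx Q = invmx Q.
  by rewrite -[invmx Q]mul1mx -QQ -[_ *m _ *m invmx Q]mulmxA mulmxV // mulmx1.
have charE : char_poly_mx (invmx Q *m realdiag d *m Q) =
  map_mx polyC (invmx Q) *m char_poly_mx (realdiag d) *m map_mx polyC Q.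
  rewrite /char_poly_mx mulmxBr mulmxBl -!map_mxM.
  by rewrite mul_mx_scalar -scalemxAl -map_mxM mulVmx // map_mx1 scalemx1.
rewrite /char_poly charE !det_mulmx mulrC mulrA -det_mulmx -map_mxM mulmxV //.
rewrite map_mx1 det1 mul1r -/(char_poly _) char_poly_trig ?diag_mx_is_trig //.
move=> charE'; apply: (@perm_map_inj _ _ (real_complex R)); first exact: complexI.
apply: prod_XsubC_eq; rewrite !big_map -charE'.
by apply: eq_bigr=> j _; rewrite !mxE eqxx mulr1n.
Qed.

End UnitaryConjugate.

Lemma mxrank_realdiag_eig n (d : 'I_n -> R) (a : R) r (Y : 'M[C]_(n, r)) :
  realdiag d *m Y = a%:C%C *: Y -> (\rank Y <= \sum_j (d j == a))%N.
Proof.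
move=> dY; set S := diag_mx (\row_j ((d j == a)%:R : C)).
have SY : S *m Y = Y.
  apply/matrixP=> i k; rewrite mul_diag_mx !mxE.
  case: eqP=> [_|dia]; first by rewrite mul1r.
  have /matrixP /(_ i k) := dY; rewrite mul_diag_mx !mxE => /eqP.
  rewrite -subr_eq0 -mulrBl mulf_eq0 subr_eq0 (inj_eq (@complexI _)).
  by rewrite (introF eqP dia) => /eqP ->; rewrite mul0r.
rewrite -SY; apply: leq_trans (mxrankM_maxl _ _) _.
apply: leq_trans (mxrank_diag_le _) _; apply: leq_sum=> j _; rewrite mxE.
by case: (d j == a); rewrite ?oner_eq0 ?eqxx.
Qed.

Lemma psd_qform_eq0 n (X : 'M[C]_n) u :
  psdmx X -> qform X u = 0 -> X *m u = 0.
Proof.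
move=> psdX; have [Q [d [QQ XE]]] := hermitian_spectral (psd_herm psdX).
have d0 j : 0 <= d j by apply: (psd_realdiag_conj_ge0 QQ); rewrite -XE.
rewrite {1}XE qform_realdiag_conj; set y := Q *m u.
have term_ge0 j : 0 <= (d j)%:C%C * `|y j 0| ^+ 2 by rewrite mulr_ge0 ?ler0c.
move=> /psumr_eq0P term0.
rewrite XE -!mulmxA -/y; suff -> : realdiag d *m y = 0 by rewrite mulmx0.
apply/matrixP=> j k; rewrite ord1 mul_diag_mx mxE [(\row_j _) 0 j]mxE [RHS]mxE.
have /eqP := term0 (fun j _ => term_ge0 j) j isT.
by rewrite mulf_eq0 expf_eq0 normr_eq0 => /orP [] /eqP ->; rewrite ?mulr0 ?mul0r.
Qed.

Lemma mxtrace_psd_mulmx_ge0 n (A B : 'M[C]_n) :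
  psdmx A -> psdmx B -> 0 <= \tr (A *m B).
Proof.
move=> psdA psdB; have [Q [d [QQ BE]]] := hermitian_spectral (psd_herm psdB).
have d0 j : 0 <= d j by apply: (psd_realdiag_conj_ge0 QQ); rewrite -BE.
rewrite BE mulmxA mxtrace_mulC !mulmxA /mxtrace; apply: sumr_ge0=> j _.
rewrite mul_mx_diag mxE [(\row_j _) 0 j]mxE mulr_ge0 ?ler0c //.
have <- : qform A (adjmx Q *m delta_mx j 0) = (Q *m A *m adjmx Q) j j.
  by rewrite -qform_conj adjmxK /qform sform_delta.
exact: psdA.
Qed.

Lemma opnorm_le m n (A : 'M[C]_(m, n)) (mu : R) :
  0 <= mu -> (forall v, vnorm (A *m v) <= mu * vnorm v) -> opnorm A <= mu.
Proof.
move=> mu0 Amu; rewrite /opnorm; set E := (X in sup X <= _).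
have [->|/set0P E0] := eqVneq E set0; first by rewrite sup0.
by apply: ge_sup E0 _ => _ [v /= v1 <-]; rewrite -[mu]mulr1 -v1.
Qed.

(* The largest eigenvalue [mu] of [M] bounds [opnorm M = 1] from above, and
   [M <= 1] bounds it by [1]; so [mu = 1] and its eigenvector lies in the
   eigenspace for [1]. *)
Lemma dim1_gt0 n (M : 'M[C]_n) :
  psdmx M -> psdmx (1%:M - M) -> opnorm M = 1 -> (0 < dim1 M)%N.
Proof.
move=> psdM psdIM normM1.
have [Q [d [QQ ME]]] := hermitian_spectral (psd_herm psdM).
pose e j : 'cV[C]_n := adjmx Q *m delta_mx j 0.
have Me j : M *m e j = (d j)%:C%C *: e j by rewrite ME realdiag_conj_eigvec.
have d0 j : 0 <= d j by apply: (psd_realdiag_conj_ge0 QQ); rewrite -ME.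
have d1 j : d j <= 1.
  have := psdIM (e j); rewrite -[leRHS]/(qform _ _) qformB qform1 qformE Me.
  rewrite dotvZr dotv_unitary_delta // mulr1 subr_ge0.
  by rewrite -(rmorph1 (real_complex R)) lecR.
pose mu := \big[Num.max/0]_j d j.
have mu1 : 1 <= mu.
  rewrite -normM1 ME; apply: opnorm_le=> [|v]; first exact: bigmax_ge_id.
  apply: vnorm_realdiag_conj_le=> // [|j]; first exact: bigmax_ge_id.
  by rewrite d0 le_bigmax.
have [j /eqP dj1] : exists j, d j == 1.
  apply/existsP; apply: contraTT mu1 => /existsPn dn1; rewrite -ltNge.
  by apply: bigmax_lt=> // j _; rewrite lt_neqAle dn1 d1.
have ej0 : adjmx (e j) != 0.
  by rewrite adjmx_eq0 -dotv_eq0 dotv_unitary_delta ?oner_eq0.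
have ejE : (adjmx (e j) <= eigenspace M 1)%MS.
  apply/eigenspaceP; rewrite -[X in _ *m X](psd_herm psdM) -adjmxM Me dj1.
  by rewrite adjmxZ; congr (_ *: _); exact: conjc_real.
by rewrite lt0n mxrank_eq0; apply: contraNneq ej0 => E0; rewrite -submx0 -E0.
Qed.

Lemma dim1_basis n (X : 'M[C]_n) : adjmx X = X ->
  exists G : 'M[C]_(n, dim1 X), X *m G = G /\ \rank G = dim1 X.
Proof.
move=> Xherm; set E := row_base (eigenspace X 1).
exists (adjmx E); split.
  have /eigenspaceP : (E <= eigenspace X 1)%MS by rewrite eq_row_base.
  by rewrite scale1r => EX; rewrite -[X in X *m _]Xherm -adjmxM EX.
by rewrite /adjmx mxrank_tr mxrank_map; apply/eqP; exact: row_base_free.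
Qed.

Lemma eigvals_desc_top n (H : 'M[C]_n) (s : seq R) (a : R) r (W : 'M[C]_(n, r)) :
  adjmx H = H -> eigvals_desc H s ->
  (forall w, qform H w <= a%:C%C * dotv w w) -> H *m W = a%:C%C *: W ->
  forall j, (j < \rank W)%N -> nth 0 s j = a.
Proof.
move=> Hherm [sorted_s charH] Hle HW.
have [Q [d [QQ HE]]] := hermitian_spectral Hherm.
have s_d : perm_eq s [seq d j | j <- index_enum 'I_n].
  by apply: (eigvals_perm_realdiag QQ); rewrite -HE.
apply: nth_sorted_ge_max sorted_s _ _ => [x|].
  rewrite (perm_mem s_d) => /mapP [j _ ->].
  have := Hle (adjmx Q *m delta_mx j 0); rewrite qformE {1}HE.
  by rewrite realdiag_conj_eigvec // dotvZr dotv_unitary_delta // !mulr1 lecR.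
rewrite (permP s_d) count_map -sum1_count big_mkcond /=.
have QW : realdiag d *m (Q *m W) = a%:C%C *: (Q *m W).
  by rewrite scalemxAr -HW HE !mulmxA (mulmx1C QQ) mul1mx.
apply: leq_trans (mxrank_realdiag_eig QW); rewrite -{1}[W]mul1mx -QQ -mulmxA.
exact: mxrankM_maxr.
Qed.

End Spectral.

Section Tensor.
Variable R : realType.
Local Notation C := R[i].

Lemma sum_mxtens_index k d (F : 'I_(k * d) -> C) :
  \sum_t F t = \sum_(i < k) \sum_(j < d) F (mxtens_index (i, j)).
Proof.
rewrite pair_big (reindex (@mxtens_index k d)) /=; last first.
  by exists (@mxtens_unindex k d) => x _; rewrite (mxtens_indexK, mxtens_unindexK).
by apply: eq_bigr => -[i j].
Qed.

Lemma sum_mx1_mul d (j : 'I_d) (F : 'I_d -> C) :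
  \sum_j' (1%:M : 'M[C]_d) j j' * F j' = F j.
Proof.
rewrite (bigD1 j) //= big1 ?addr0 => [|j' /negbTE j'j].
  by rewrite mxE eqxx mul1r.
by rewrite mxE eq_sym j'j mul0r.
Qed.

Lemma psd_tensmx1 k d (A : 'M[C]_k) : psdmx A -> psdmx (A *t (1%:M : 'M[C]_d)).
Proof.
move=> psdA v; rewrite -[leRHS]/(qform _ _) qform_entries sum_mxtens_index.
pose w (j : 'I_d) : 'cV[C]_k := \col_i v (mxtens_index (i, j)) 0.
rewrite exchange_big (eq_bigr (fun j => qform A (w j))) => [|j _].
  by apply: sumr_ge0 => j _; apply: psdA.
rewrite qform_entries; apply: eq_bigr => i _.
rewrite sum_mxtens_index; apply: eq_bigr => i' _.
under eq_bigr => j' _ do rewrite tensmxE mulrA [_ * 1%:M j j']mulrC -!mulrA.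
by rewrite sum_mx1_mul !mxE mulrA.
Qed.

Lemma mxtrace_ptrace2 k d (A : 'M[C]_k) (Y : 'M[C]_(k * d)) :
  \tr (A *m ptrace2 Y) = \tr ((A *t (1%:M : 'M[C]_d)) *m Y).
Proof.
rewrite /mxtrace sum_mxtens_index.
under [RHS]eq_bigr => i _ do under eq_bigr => j _ do rewrite mxE sum_mxtens_index.
apply: eq_bigr => i _; rewrite mxE exchange_big; apply: eq_bigr => i' _.
rewrite mxE mulr_sumr; apply: eq_bigr => j _.
under eq_bigr => j' _ do
  rewrite tensmxE -mulrA [1%:M j j' * _]mulrC mulrA [_ * 1%:M j j']mulrC.
by rewrite sum_mx1_mul.
Qed.

End Tensor.

Section Channel.
Variable R : realType.
Local Notation C := R[i].

Variables (l N k d : nat) (M : 'I_l -> 'M[C]_N) (sigma : 'I_l -> 'M[C]_k)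
  (V : 'M[C]_(k * d, N)).
Hypotheses (povmM : povm M) (stV : stinespring (mpchannel M sigma) V).

Lemma povm_psd i : psdmx (M i). Proof. by case: povmM. Qed.

Lemma povm_compl_psd i : psdmx (1%:M - M i).
Proof.
case: povmM => _ <-; rewrite (bigD1 i) //= addrAC subrr add0r.
by apply: psd_sum => j _; apply: povm_psd.
Qed.

(* The effects are positive and sum to the identity, so on an
   eigenvalue-1 eigenvector of [M i] the quadratic forms of the others sum
   to [0]. *)
Lemma povm_eig1_orth i p (G : 'M[C]_(N, p)) : M i *m G = G ->
  forall j, j != i -> M j *m G = 0.
Proof.
move=> MG j ji; apply/matrixP=> a b; rewrite [RHS]mxE.
have Mu : M i *m col b G = col b G by rewrite !colE mulmxA MG.
suff /(congr1 (fun u : 'cV[C]_N => u a 0)) : M j *m col b G = 0.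
  by rewrite colE mulmxA -colE !mxE.
apply: psd_qform_eq0; first exact: povm_psd.
have : qform (\sum_t M t) (col b G) = dotv (col b G) (col b G).
  by case: povmM => _ ->; rewrite qform1.
rewrite qform_sum (bigD1 i) //= qformE Mu -[RHS]addr0 => /addrI /psumr_eq0P.
by apply=> // t _; apply: povm_psd.
Qed.

(* Compare entries through [X a b = Tr (X *m delta_mx b a)]; the Stinespring
   identity then reads [Tr (A Phi(X)) = Tr ((A (x) 1) V X V^* )]. *)
Lemma stinespring_dual (A : 'M[C]_k) :
  adjmx V *m (A *t (1%:M : 'M[C]_d)) *m V = \sum_i \tr (A *m sigma i) *: M i.
Proof.
case: stV => _ PhiV; apply/matrixP => a b.
have trE (X : 'M[C]_N) : \tr (X *m delta_mx b a) = X a b.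
  rewrite /mxtrace (bigD1 a) //= big1 ?addr0 => [|t /negbTE ta].
    rewrite mxE (bigD1 b) //= big1 ?addr0 => [|u /negbTE ub].
      by rewrite !mxE !eqxx mulr1.
    by rewrite !mxE ub mulr0.
  by rewrite mxE big1 // => u _; rewrite !mxE ta andbF mulr0.
rewrite -!trE -!mulmxA mxtrace_mulC -mulmxA -mxtrace_ptrace2 -PhiV.
rewrite /mpchannel mulmx_sumr mulmx_suml !raddf_sum /=; apply: eq_bigr => i _.
by rewrite -scalemxAr -scalemxAl !mxtraceZ mulrC.
Qed.

Hypothesis psd_sigma : forall i, psdmx (sigma i).
Variable A : 'M[C]_k.
Hypothesis psdA : psdmx A.

Local Notation c i := (\tr (A *m sigma i)).
Let K := \sum_i c i *: M i.
Let H := V *m adjmx V *m (A *t (1%:M : 'M[C]_d)) *m (V *m adjmx V).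

Lemma mpchannel_outputE : H = V *m K *m adjmx V.
Proof. by rewrite /H /K -stinespring_dual !mulmxA. Qed.

Lemma mpchannel_output_herm : adjmx H = H.
Proof.
by rewrite /H !adjmxM adjmxK (psd_herm (psd_tensmx1 (d := d) psdA)) !mulmxA.
Qed.

Lemma mpchannel_output_eig i p (G : 'M[C]_(N, p)) :
  M i *m G = G -> H *m (V *m G) = c i *: (V *m G).
Proof.
case: stV => VV _ MG; have KG : K *m G = c i *: G.
  rewrite mulmx_suml (bigD1 i) //= big1 ?addr0 => [|j ji].
    by rewrite -scalemxAl MG.
  by rewrite -scalemxAl (povm_eig1_orth MG ji) scaler0.
by rewrite mpchannel_outputE -!mulmxA (mulmxA _ V) VV mul1mx KG scalemxAr.
Qed.

Lemma mpchannel_output_qform_le (a : C) : 0 <= a -> (forall j, c j <= a) ->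
  forall w, qform H w <= a * dotv w w.
Proof.
case: stV => VV _ a0 ca w.
rewrite mpchannel_outputE -[V in V *m K]adjmxK qform_conj qform_sum.
set x := adjmx V *m w; apply: le_trans (_ : \sum_j a * qform (M j) x <= _).
  by apply: ler_sum => j _; rewrite qformZ ler_wpM2r //; apply: povm_psd.
rewrite -mulr_sumr -qform_sum; case: povmM => _ ->; rewrite qform1.
by rewrite ler_wpM2l // dotv_adj_isometry_le.
Qed.

Lemma mpchannel_top_eigvals (s : seq R) (a : R) i :
  eigvals_desc H s -> (forall j, c j <= a%:C%C) -> c i = a%:C%C ->
  forall j, (j < dim1 (M i))%N -> nth 0 s j = a.
Proof.
move=> eig_s ca cia j lt_j.
have [G [MG rkG]] := dim1_basis (psd_herm (povm_psd i)).
have a0 : 0 <= a%:C%C :> C by rewrite -cia mxtrace_psd_mulmx_ge0.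
apply: (eigvals_desc_top mpchannel_output_herm eig_s
          (mpchannel_output_qform_le a0 ca) (W := V *m G)).
  by rewrite (mpchannel_output_eig MG) cia.
have rkVG : (\rank G <= \rank (V *m G))%N.
  by case: stV => VV _; rewrite -{1}[G]mul1mx -VV -mulmxA mxrankM_maxr.
by rewrite rkG in rkVG; apply: leq_trans rkVG.
Qed.

End Channel.

Theorem proposition6p2 (R : realType) (k l : nat) (hl : (1 <= l)%N)
  (sigma : 'I_l -> 'M[R[i]]_k) (hsigma : forall i, density (sigma i))
  (N : nat -> nat) (M : forall n, 'I_l -> 'M[R[i]]_(N n))
  (hM : forall n, povm (M n))
  (hnorm : forall n i, opnorm (M n i) = 1)
  (d : nat -> nat) (V : forall n, 'M[R[i]]_(k * d n, N n))
  (hV : forall n, stinespring (mpchannel (M n) sigma) (V n))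
  (m : nat)
  (hm : liminf_nat_eq (fun n => \big[minn/N n]_(i < l) dim1 (M n i)) m) :
  (1 <= m)%N /\ condC m (fun n => V n *m adjmx (V n)).
Proof.
have dim1_gt0_M n i : (0 < dim1 (M n i))%N.
  exact: dim1_gt0 (povm_psd (hM n) i) (povm_compl_psd (hM n) i) (hnorm n i).
split=> [|A [psdA _]].
  have [n [_ min_le_m]] := hm.2 0%N; apply: leq_trans min_le_m.
  rewrite -minEnat; apply: (@le_bigmin _ nat) => [|i _]; last exact: dim1_gt0_M.
  exact: leq_trans (dim1_gt0_M n (Ordinal hl)) (rank_leq_col _).
have psd_sigma i := proj1 (hsigma i).
pose c i := complex.Re (\tr (A *m sigma i)).
have cE i : \tr (A *m sigma i) = (c i)%:C%C.
  have := mxtrace_psd_mulmx_ge0 psdA (psd_sigma i).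
  by rewrite /c => /ger0_real/complex_realP [x ->].
have [imax _ c_max] := @arg_maxP _ _ _ (Ordinal hl) xpredT c isT.
exists (c imax) => s eig_s j lt_jm; have [n0 m_le_min] := hm.1.
apply: cvg_near_cst; exists n0 => // n /= le_n.
apply: (mpchannel_top_eigvals (hM n) (hV n) psd_sigma psdA (eig_s n) _ (cE imax)).
  by move=> i; rewrite cE lecR; apply: c_max.
apply: leq_trans lt_jm (leq_trans (m_le_min n le_n) _).
by rewrite -minEnat; exact: (@bigmin_le _ nat).
Qed.
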